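(* Let $n$ and $\rho$ be positive integers with $\rho<n/2$, and let ${\cal C}$ be a binary $[n\times n,\,n(n-2\rho),\,2\rho+1]$ linear array code (the paper uses the optimal array code of this kind constructed by Roth). Define the binary code over graphs $\mathcal{C}_{{\cal G}_2}=\{G=(V_n,L)\mid A_G\in{\cal C}\}$. Then $\mathcal{C}_{{\cal G}_2}$ is a linear binary code over graphs of dimension $k_{\cal G}=n(n-2\rho)$ which is $\rho$-node-erasure-correcting.
   Context: $[n]=\{0,\ldots,n-1\}$, $V_n=\{v_0,\ldots,v_{n-1}\}$. A binary graph $G=(V_n,L)$ is a complete directed graph with self loops and labeling $L:V_n\times V_n\to\{0,1\}$; its adjacency matrix is the $n\times n$ matrix $A_G=[a_{i,j}]$ with $a_{i,j}=L(v_i,v_j)$. A cover of an $n\times n$ matrix $\Gamma=[\gamma_{i,j}]$ is a pair $(S,T)$ of subsets of $[n]$ such that $\gamma_{i,j}\neq0$ implies $i\in S$ or $j\in T$; the cover-weight $w(\Gamma)$ is the minimum of $|S|+|T|$ over all covers. An $[n\times n,k,d]$ linear array code over a field is a $k$-dimensional linear space of $n\times n$ matrices over that field in which every nonzero matrix has cover-weight at least $d$ (with $d$ the minimum). A failure of node $i$ erases the labels of all edges $(v_i,v_j)$ and $(v_j,v_i)$, $j\in[n]$ (i.e., row $i$ and column $i$ of $A_G$), with the failed indices known. A code over graphs is $\rho$-node-erasure-correcting if for every graph in the code and any $\rho$ failed nodes, the erased labels are uniquely determined; its dimension is $\log_2$ of its size. *)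

From HB Require Import structures.
From mathcomp Require Import all_boot all_order all_algebra.
Set Implicit Arguments. Unset Strict Implicit. Unset Printing Implicit Defensive.
Import GRing.Theory.
Local Open Scope ring_scope.

Definition is_cover (F : nzRingType) (n : nat) (Gamma : 'M[F]_n)
  (S T : {set 'I_n}) : bool :=
  [forall i, forall j, (Gamma i j != 0) ==> (i \in S) || (j \in T)].

(* cover-weight: minimum of |S|+|T| over all covers (S,T); the pair
   (setT,setT) is always a cover of weight 2n, so 2n is a correct default. *)
Definition cover_weight (F : nzRingType) (n : nat) (Gamma : 'M[F]_n) : nat :=
  \big[minn/(n + n)%N]_(p : {set 'I_n} * {set 'I_n} | is_cover Gamma p.1 p.2)
     (#|p.1| + #|p.2|)%N.

Definition is_array_code (F : fieldType) (n : nat) (k d : nat)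
  (C : {vspace 'M[F]_n}) : Prop :=
  [/\ \dim C = k,
      (forall G, G \in C -> G != 0 -> (d <= cover_weight G)%N) &
      (exists2 G, G \in C & (G != 0) && (cover_weight G == d))].

(* binary graphs on V_n = {v_0..v_{n-1}}: labelings L : V_n x V_n -> {0,1} *)
Definition bgraph (n : nat) := {ffun 'I_n * 'I_n -> bool}.

Definition adjmx (n : nat) (G : bgraph n) : 'M['F_2]_n :=
  \matrix_(i, j) (nat_of_bool (G (i, j)))%:R.

Definition graph_code (n : nat) (C : {vspace 'M['F_2]_n}) : {set bgraph n} :=
  [set G : bgraph n | adjmx G \in C].

Definition linear_graph_code (n : nat) (CG : {set bgraph n}) : Prop :=
  [ffun=> false] \in CG /\
  (forall G1 G2, G1 \in CG -> G2 \in CG -> [ffun e => G1 e (+) G2 e] \in CG).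

Definition graph_code_dim (n k : nat) (CG : {set bgraph n}) : Prop :=
  #|CG| = (2 ^ k)%N.

Definition node_erasure_correcting (n rho : nat) (CG : {set bgraph n}) : Prop :=
  forall (G1 G2 : bgraph n) (Fl : {set 'I_n}),
    G1 \in CG -> G2 \in CG -> #|Fl| = rho ->
    (forall i j, i \notin Fl -> j \notin Fl -> G1 (i, j) = G2 (i, j)) ->
    G1 = G2.

(* A graph is coded by its adjacency matrix, and over F_2 the map G |-> A_G is a
   bijection sending edgewise XOR to matrix addition, so the graph code is a copy
   of the linear space C: it is linear and has 2^(dim C) elements.  If rho nodes
   fail, two codewords agreeing on all surviving edges differ by a matrix whose
   nonzero entries lie in the failed rows and columns; taking the failed set as
   both S and T covers it with weight 2 rho < 2 rho + 1, so the difference is 0. *)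

From mathcomp Require Import all_boot all_order all_algebra finfield.
Set Implicit Arguments. Unset Strict Implicit. Unset Printing Implicit Defensive.
Import Order.TTheory GRing.Theory.
Local Open Scope ring_scope.

Section CoverWeight.

Variables (F : nzRingType) (n : nat).

Lemma cover_weight_le (M : 'M[F]_n) (S T : {set 'I_n}) :
  is_cover M S T -> (cover_weight M <= #|S| + #|T|)%N.
Proof.
move=> cov; rewrite /cover_weight -minEnat.
exact: (bigmin_le_cond _ (fun p : {set 'I_n} * {set 'I_n} => #|p.1| + #|p.2|)%N
          (j := (S, T)) (P := fun p => is_cover M p.1 p.2) cov).
Qed.

Lemma is_cover_subr_agree (A B : 'M[F]_n) (X : {set 'I_n}) :
  (forall i j, i \notin X -> j \notin X -> A i j = B i j) ->
  is_cover (A - B) X X.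
Proof.
move=> AB; apply/forallP => i; apply/forallP => j; apply/implyP.
rewrite !mxE; apply: contraR; rewrite negb_or => /andP[/AB/[apply]->].
by rewrite subrr.
Qed.

End CoverWeight.

Lemma array_code_eq_agree (F : fieldType) (n d : nat) (C : {vspace 'M[F]_n})
    (A B : 'M[F]_n) (X : {set 'I_n}) :
  (forall M, M \in C -> M != 0 -> (d <= cover_weight M)%N) ->
  A \in C -> B \in C -> (#|X|.*2 < d)%N ->
  (forall i j, i \notin X -> j \notin X -> A i j = B i j) ->
  A = B.
Proof.
move=> min_weight CA CB ltXd AB; apply/eqP; rewrite -subr_eq0.
apply: contraLR ltXd => nzAB; rewrite -leqNgt -addnn.
apply: leq_trans (min_weight _ (memvB CA CB) nzAB) (cover_weight_le _).
exact: is_cover_subr_agree.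
Qed.

Lemma natr_addb (b c : bool) :
  (((b (+) c) : nat)%:R : 'F_2) = (b : nat)%:R + (c : nat)%:R.
Proof. by case: b; case: c => //=; apply/val_inj. Qed.

Lemma natr_neq0 (x : 'F_2) : ((x != 0 : bool) : nat)%:R = x.
Proof. by case: x => [[|[|m]] Hm] //; apply/val_inj. Qed.

Section GraphCode.

Variable n : nat.

Definition graph_of_mx (M : 'M['F_2]_n) : bgraph n := [ffun e => M e.1 e.2 != 0].

Lemma adjmxK : cancel (@adjmx n) graph_of_mx.
Proof.
move=> G; apply/ffunP => -[i j]; rewrite ffunE mxE /=.
by case: (G (i, j)); rewrite ?oner_eq0 ?eqxx.
Qed.

Lemma graph_of_mxK : cancel graph_of_mx (@adjmx n).
Proof. by move=> M; apply/matrixP => i j; rewrite !mxE ffunE natr_neq0. Qed.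

Lemma adjmx_inj : injective (@adjmx n).
Proof. exact: can_inj adjmxK. Qed.

Lemma adjmx0 : adjmx [ffun=> false] = 0 :> 'M['F_2]_n.
Proof. by apply/matrixP => i j; rewrite !mxE ffunE. Qed.

Lemma adjmx_addb (G1 G2 : bgraph n) :
  adjmx [ffun e => G1 e (+) G2 e] = adjmx G1 + adjmx G2.
Proof. by apply/matrixP => i j; rewrite !mxE ffunE natr_addb. Qed.

Variable C : {vspace 'M['F_2]_n}.

Lemma graph_code_linear : linear_graph_code (graph_code C).
Proof.
split=> [|G1 G2]; rewrite !inE ?adjmx0 ?mem0v // => CG1 CG2.
by rewrite adjmx_addb memvD.
Qed.

Lemma card_graph_code : #|graph_code C| = (2 ^ \dim C)%N.
Proof.
have -> : graph_code C = @adjmx n @^-1: C by apply/setP => G; rewrite !inE.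
rewrite on_card_preimset ?card_vspace ?card_Fp //.
exact/onW_bij/(Bijective adjmxK graph_of_mxK).
Qed.

Lemma graph_code_node_erasure (rho : nat) :
  (forall M, M \in C -> M != 0 -> (rho.*2 < cover_weight M)%N) ->
  node_erasure_correcting rho (graph_code C).
Proof.
move=> min_weight G1 G2 X; rewrite !inE => CG1 CG2 cardX agree.
apply: adjmx_inj; apply: (array_code_eq_agree (X := X) min_weight CG1 CG2).
  by rewrite cardX ltnSn.
by move=> i j Xi Xj; rewrite !mxE agree.
Qed.

End GraphCode.

Theorem theorem2 (n rho : nat) (C : {vspace 'M['F_2]_n}) :
  (0 < n)%N -> (0 < rho)%N -> (rho.*2 < n)%N ->
  @is_array_code _ n (n * (n - rho.*2)) rho.*2.+1 C ->
  [/\ linear_graph_code (graph_code C),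
      graph_code_dim (n * (n - rho.*2)) (graph_code C) &
      node_erasure_correcting rho (graph_code C)].
Proof.
move=> _ _ _ [dimC min_weight _]; split.
- exact: graph_code_linear.
- by rewrite /graph_code_dim card_graph_code dimC.
- exact: graph_code_node_erasure.
Qed.
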